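(* Let $0\to R\to F\xrightarrow{\pi} L\to 0$ be a free presentation of a Lie superalgebra $L$ (so $F$ is a free Lie superalgebra and $R$ a graded ideal), and let $\bar\pi:F/[R,F]\to L$ be the induced epimorphism. Then $Z^{*}(L)=\bar\pi\big(Z(F/[R,F])\big)$.
   Context: All algebras are over a field $\mathbb{F}$ of characteristic $\neq 2,3$. A Lie superalgebra $L$ is capable if $L\cong H/Z(H)$ for some Lie superalgebra $H$. The epicenter $Z^{*}(L)$ is the smallest graded ideal $I$ of $L$ such that $L/I$ is capable. *)

From HB Require Import structures.
From mathcomp Require Import all_boot all_order all_algebra.
Set Implicit Arguments. Unset Strict Implicit. Unset Printing Implicit Defensive.
Import GRing.Theory.
Local Open Scope ring_scope.

(* sign (-1)^{p q} for parities p q (true = odd) *)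
Definition psign (K : fieldType) (p q : bool) : K := if p && q then -1 else 1.

Definition homog (V : Type) (ev od : V -> Prop) (p : bool) (x : V) : Prop :=
  if p then od x else ev x.

HB.mixin Record isLieSuper (K : fieldType) V of GRing.Lmodule K V := {
  lbr : V -> V -> V;
  sev : V -> Prop;
  sod : V -> Prop;
  sev0 : sev 0;
  sevD : forall x y, sev x -> sev y -> sev (x + y);
  sevZ : forall (a : K) x, sev x -> sev (a *: x);
  sod0 : sod 0;
  sodD : forall x y, sod x -> sod y -> sod (x + y);
  sodZ : forall (a : K) x, sod x -> sod (a *: x);
  sdecomp : forall x, exists a b, sev a /\ sod b /\ x = a + b;
  sdirect : forall x, sev x -> sod x -> x = 0;
  lbr_linl : forall (a : K) x y z, lbr (a *: x + y) z = a *: lbr x z + lbr y z;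
  lbr_linr : forall (a : K) x y z, lbr z (a *: x + y) = a *: lbr z x + lbr z y;
  lbr_graded : forall (p q : bool) x y,
    homog sev sod p x -> homog sev sod q y -> homog sev sod (addb p q) (lbr x y);
  lbr_santi : forall (p q : bool) x y,
    homog sev sod p x -> homog sev sod q y ->
    lbr x y = - (psign K p q *: lbr y x);
  lbr_sjacobi : forall (p q r : bool) x y z,
    homog sev sod p x -> homog sev sod q y -> homog sev sod r z ->
    psign K p r *: lbr x (lbr y z) + psign K q p *: lbr y (lbr z x)
      + psign K r q *: lbr z (lbr x y) = 0
}.

#[short(type="lieSuperType")]
HB.structure Definition LieSuper (K : fieldType) :=
  { V of isLieSuper K V & GRing.Lmodule K V }.

Section Defs.
Variable K : fieldType.

Definition is_lshom (L M : lieSuperType K) (f : L -> M) : Prop :=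
  (forall (a : K) x y, f (a *: x + y) = a *: f x + f y) /\
  (forall x, sev x -> sev (f x)) /\ (forall x, sod x -> sod (f x)) /\
  (forall x y, f (lbr x y) = lbr (f x) (f y)).

Definition surj (A B : Type) (f : A -> B) : Prop := forall b, exists a, f a = b.

Definition lcenter (H : lieSuperType K) (x : H) : Prop := forall y : H, lbr x y = 0.

Definition graded_ideal (L : lieSuperType K) (I : L -> Prop) : Prop :=
  I 0 /\ (forall x y, I x -> I y -> I (x + y)) /\
  (forall (a : K) x, I x -> I (a *: x)) /\
  (forall x, I x -> exists a b, sev a /\ sod b /\ I a /\ I b /\ x = a + b) /\
  (forall x y, I x -> I (lbr x y) /\ I (lbr y x)).

(* L is capable: L ≅ H / Z(H), i.e. there is a surjective homomorphism
   H -> L whose kernel is Z(H) *)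
Definition capable (L : lieSuperType K) : Prop :=
  exists (H : lieSuperType K) (f : H -> L),
    is_lshom f /\ surj f /\ (forall h, f h = 0 <-> lcenter h).

(* L / I is capable: some (hence every) quotient Q ≅ L/I is capable *)
Definition quot_capable (L : lieSuperType K) (I : L -> Prop) : Prop :=
  exists (Q : lieSuperType K) (p : L -> Q),
    is_lshom p /\ surj p /\ (forall x, p x = 0 <-> I x) /\ capable Q.

Definition is_epicenter (L : lieSuperType K) (I : L -> Prop) : Prop :=
  graded_ideal I /\ quot_capable I /\
  (forall J : L -> Prop, graded_ideal J -> quot_capable J ->
     forall x, I x -> J x).

Definition free_on (X : Type) (par : X -> bool) (F : lieSuperType K)
    (i : X -> F) : Prop :=
  (forall x, homog sev sod (par x) (i x)) /\
  forall (H : lieSuperType K) (g : X -> H),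
    (forall x, homog sev sod (par x) (g x)) ->
    exists phi : F -> H, is_lshom phi /\ (forall x, phi (i x) = g x) /\
      forall psi : F -> H, is_lshom psi -> (forall x, psi (i x) = g x) ->
        forall y, psi y = phi y.

Definition comm_sub (F : lieSuperType K) (R : F -> Prop) (x : F) : Prop :=
  exists s : seq (F * F), (forall pr, pr \in s -> R pr.1) /\
    x = \sum_(pr <- s) lbr pr.1 pr.2.

End Defs.

From HB Require Import structures.
From mathcomp Require Import all_boot all_order all_algebra.
From mathcomp Require Import boolp.
Set Implicit Arguments. Unset Strict Implicit. Unset Printing Implicit Defensive.
Import GRing.Theory.
Local Open Scope ring_scope.

(* The kernel R/[R,F] of [pibar] is central in Q = F/[R,F], so L/pibar(Z(Q))
   is isomorphic to Q/Z(Q) and hence capable.  Conversely, if L/J is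
   isomorphic to H/Z(H), freeness of F lifts F -> L -> L/J to psi : F -> H.
   Then psi maps R into Z(H), hence kills [R,F]; as psi(F) + Z(H) = H, every
   z in Z(Q) lifts to an element of F whose image under psi is central,
   i.e. pibar z lies in J. *)

Section LieSuperTheory.
Variables (K : fieldType) (L : lieSuperType K).
Implicit Types x y z c : L.

Lemma lbrDl x y z : lbr (x + y) z = lbr x z + lbr y z.
Proof. by have := lbr_linl 1 x y z; rewrite !scale1r. Qed.

Lemma lbrDr x y z : lbr z (x + y) = lbr z x + lbr z y.
Proof. by have := lbr_linr 1 x y z; rewrite !scale1r. Qed.

Lemma lbr0l z : lbr 0 z = 0.
Proof. by apply: (@addrI _ (lbr 0 z)); rewrite -lbrDl !addr0. Qed.

Lemma lbr0r z : lbr z 0 = 0.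
Proof. by apply: (@addrI _ (lbr z 0)); rewrite -lbrDr !addr0. Qed.

Lemma lbrZl a x z : lbr (a *: x) z = a *: lbr x z.
Proof. by have := lbr_linl a x 0 z; rewrite !addr0 lbr0l addr0. Qed.

Lemma lbrZr a x z : lbr z (a *: x) = a *: lbr z x.
Proof. by have := lbr_linr a x 0 z; rewrite !addr0 lbr0r addr0. Qed.

Lemma lbrBl x y z : lbr (x - y) z = lbr x z - lbr y z.
Proof. by rewrite lbrDl -scaleN1r lbrZl scaleN1r. Qed.

Lemma lbrBr x y z : lbr z (x - y) = lbr z x - lbr z y.
Proof. by rewrite lbrDr -scaleN1r lbrZr scaleN1r. Qed.

Lemma sevN x : sev x -> sev (- x).
Proof. by rewrite -scaleN1r; apply: sevZ. Qed.

Lemma sodN x : sod x -> sod (- x).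
Proof. by rewrite -scaleN1r; apply: sodZ. Qed.

Lemma sev_sod_add_eq0 x y : sev x -> sod y -> x + y = 0 -> x = 0 /\ y = 0.
Proof.
move=> hx hy /eqP; rewrite addr_eq0 => /eqP ex.
have x0 : x = 0 by apply: sdirect => //; rewrite ex; apply: sodN.
by split=> //; apply/eqP; rewrite -oppr_eq0 -ex x0.
Qed.

Lemma lcenter_homog_components c c0 c1 : lcenter c -> sev c0 -> sod c1 ->
  c = c0 + c1 -> lcenter c0 /\ lcenter c1.
Proof.
move=> hc h0 h1 ec.
have brh p y : homog sev sod p y -> lbr c0 y = 0 /\ lbr c1 y = 0.
  move=> hy; have e : lbr c0 y + lbr c1 y = 0 by rewrite -lbrDl -ec hc.
  have g0 := lbr_graded false p _ _ h0 hy; have g1 := lbr_graded true p _ _ h1 hy.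
  case: p hy g0 g1 => _ /= g0 g1; last exact: sev_sod_add_eq0.
  by rewrite addrC in e; have [] := sev_sod_add_eq0 g1 g0 e.
split=> y; have [a [b [ha [hb ->]]]] := sdecomp y; rewrite lbrDr.
  by rewrite (brh false a ha).1 (brh true b hb).1 addr0.
by rewrite (brh false a ha).2 (brh true b hb).2 addr0.
Qed.

(* [lcenter] only asks [lbr c y = 0]; super-antisymmetry on the homogeneous
   components gives the other side. *)
Lemma lbr_lcenter c y : lcenter c -> lbr y c = 0.
Proof.
move=> hc; have [c0 [c1 [h0 [h1 ec]]]] := sdecomp c.
have [z0 z1] := lcenter_homog_components hc h0 h1 ec.
have [a [b [ha [hb ->]]]] := sdecomp y.
rewrite ec !lbrDl !lbrDr.
rewrite (lbr_santi false false _ _ ha h0) (lbr_santi false true _ _ ha h1).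
rewrite (lbr_santi true false _ _ hb h0) (lbr_santi true true _ _ hb h1).
by rewrite z0 z1 !z0 !z1 !scaler0 !oppr0 !addr0.
Qed.

Lemma lcenter0 : lcenter (0 : L).
Proof. exact: lbr0l. Qed.

Lemma lcenterD c d : lcenter c -> lcenter d -> lcenter (c + d).
Proof. by move=> hc hd y; rewrite lbrDl hc hd addr0. Qed.

Lemma lcenterZ a c : lcenter c -> lcenter (a *: c).
Proof. by move=> hc y; rewrite lbrZl hc scaler0. Qed.

End LieSuperTheory.

Section GradedIdeal.
Variables (K : fieldType) (L : lieSuperType K) (I : L -> Prop).
Hypothesis hI : graded_ideal I.

Lemma ideal0 : I 0. Proof. by case: hI. Qed.

Lemma idealD x y : I x -> I y -> I (x + y). Proof. by case: hI => _ [h _]; apply: h. Qed.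

Lemma idealZ a x : I x -> I (a *: x). Proof. by case: hI => _ [_ [h _]]; apply: h. Qed.

Lemma idealN x : I x -> I (- x).
Proof. by rewrite -scaleN1r; apply: idealZ. Qed.

Lemma ideal_homog x : I x -> exists a b, sev a /\ sod b /\ I a /\ I b /\ x = a + b.
Proof. by case: hI => _ [_ [_ [h _]]]; apply: h. Qed.

Lemma ideal_lbr x y : I x -> I (lbr x y) /\ I (lbr y x).
Proof. by case: hI => _ [_ [_ [_ h]]]; apply: h. Qed.

Lemma ideal_sev_sod x y : sev x -> sod y -> I (x - y) -> I x.
Proof.
move=> hx hy /ideal_homog [a [b [ha [hb [Ia [Ib e]]]]]].
have e2 : (x - a) + (- (y + b)) = 0 by rewrite opprD addrACA -opprD -e subrr.
have [/eqP e3 _] := sev_sod_add_eq0 (sevD _ _ hx (sevN ha)) (sodN (sodD _ _ hy hb)) e2.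
by move: e3; rewrite subr_eq0 => /eqP ->.
Qed.

End GradedIdeal.

Record coset (K : fieldType) (L : lieSuperType K) (I : L -> Prop) := Coset {
  coset_mem : L -> Prop;
  coset_memP : exists x, coset_mem = (fun y => I (y - x)) }.

(* The quotient L/I; the otherwise unused proof [hI] lets the Lie superalgebra
   structure below be declared as an instance on this type. *)
Definition lquot (K : fieldType) (L : lieSuperType K) (I : L -> Prop)
  (hI : graded_ideal I) : Type := coset I.

HB.instance Definition _ (K : fieldType) (L : lieSuperType K) (I : L -> Prop)
  (hI : graded_ideal I) := gen_eqMixin (lquot hI).
HB.instance Definition _ (K : fieldType) (L : lieSuperType K) (I : L -> Prop)
  (hI : graded_ideal I) := gen_choiceMixin (lquot hI).

Section QuotientZmod.
Variables (K : fieldType) (L : lieSuperType K) (I : L -> Prop).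
Hypothesis hI : graded_ideal I.
Local Notation Q := (lquot hI).
Implicit Types (x y z : L) (c d e : Q).

Definition lqpi x : Q := Coset (ex_intro (fun u => _ = fun y => I (y - u)) x erefl).
Definition lqrepr c : L := projT1 (cid (coset_memP c)).

Lemma coset_ext c d : coset_mem c = coset_mem d -> c = d.
Proof.
case: c d => [P p] [P' p'] /= eP; subst P'.
by rewrite (Prop_irrelevance p p').
Qed.

Lemma lqpi_eq x y : I (x - y) -> lqpi x = lqpi y.
Proof.
move=> h; apply: coset_ext => /=; apply: funext => z; apply: propext; split=> h2.
  by rewrite -(subrKA x z (- y)); apply: (idealD hI).
by rewrite -(subrKA y z (- x)) -(opprB x y); exact: (idealD hI h2 (idealN hI h)).
Qed.

Lemma lqpi_eqP x y : lqpi x = lqpi y -> I (x - y).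
Proof.
move=> /(congr1 (@coset_mem _ _ _)) /(congr1 (fun P => P x)) /= <-.
by rewrite subrr; apply: (ideal0 hI).
Qed.

Lemma lqreprK c : lqpi (lqrepr c) = c.
Proof. by apply: coset_ext; rewrite /lqrepr; case: cid => x /= ->. Qed.

Lemma lquot_ind (P : Q -> Prop) : (forall x, P (lqpi x)) -> forall c, P c.
Proof. by move=> H c; rewrite -(lqreprK c). Qed.

Lemma lqrepr_pi x : I (lqrepr (lqpi x) - x).
Proof. by apply: lqpi_eqP; rewrite lqreprK. Qed.

Definition lqadd c d := lqpi (lqrepr c + lqrepr d).
Definition lqopp c := lqpi (- lqrepr c).
Definition lqscale (a : K) c := lqpi (a *: lqrepr c).
Definition lqlbr c d := lqpi (lbr (lqrepr c) (lqrepr d)).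
Definition lqsev c : Prop := exists x, sev x /\ c = lqpi x.
Definition lqsod c : Prop := exists x, sod x /\ c = lqpi x.

Lemma lqaddE x y : lqadd (lqpi x) (lqpi y) = lqpi (x + y).
Proof. by apply: lqpi_eq; rewrite opprD addrACA; apply: (idealD hI); apply: lqrepr_pi. Qed.

Lemma lqoppE x : lqopp (lqpi x) = lqpi (- x).
Proof. by apply: lqpi_eq; rewrite -opprD; apply/(idealN hI)/lqrepr_pi. Qed.

Lemma lqscaleE a x : lqscale a (lqpi x) = lqpi (a *: x).
Proof. by apply: lqpi_eq; rewrite -scalerBr; apply/(idealZ hI)/lqrepr_pi. Qed.

Lemma lqlbrE x y : lqlbr (lqpi x) (lqpi y) = lqpi (lbr x y).
Proof.
apply: lqpi_eq.
have -> : lbr (lqrepr (lqpi x)) (lqrepr (lqpi y)) - lbr x y =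
    lbr (lqrepr (lqpi x) - x) (lqrepr (lqpi y)) + lbr x (lqrepr (lqpi y) - y).
  by rewrite lbrBl lbrBr addrA subrK.
by apply: (idealD hI); [apply: (ideal_lbr hI _ (lqrepr_pi x)).1
                  | apply: (ideal_lbr hI _ (lqrepr_pi y)).2].
Qed.

Lemma lqaddA : associative lqadd.
Proof.
move=> c d e; elim/lquot_ind: c => x; elim/lquot_ind: d => y; elim/lquot_ind: e => z.
by rewrite !lqaddE addrA.
Qed.

Lemma lqaddC : commutative lqadd.
Proof. by move=> c d; elim/lquot_ind: c => x; elim/lquot_ind: d => y; rewrite !lqaddE addrC. Qed.

Lemma lqadd0 : left_id (lqpi 0) lqadd.
Proof. by move=> c; elim/lquot_ind: c => x; rewrite lqaddE add0r. Qed.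

Lemma lqaddN : left_inverse (lqpi 0) lqopp lqadd.
Proof. by move=> c; elim/lquot_ind: c => x; rewrite lqoppE lqaddE addNr. Qed.

End QuotientZmod.

HB.instance Definition _ (K : fieldType) (L : lieSuperType K) (I : L -> Prop)
  (hI : graded_ideal I) :=
  GRing.isZmodule.Build (lquot hI)
    (@lqaddA K L I hI) (@lqaddC K L I hI) (@lqadd0 K L I hI) (@lqaddN K L I hI).

Section QuotientLmod.
Variables (K : fieldType) (L : lieSuperType K) (I : L -> Prop).
Hypothesis hI : graded_ideal I.
Local Notation Q := (lquot hI).
Local Notation lqpi := (lqpi hI).
Implicit Types x y : L.

Lemma lqpiD x y : lqpi x + lqpi y = lqpi (x + y). Proof. exact: lqaddE. Qed.

Lemma lqpiN x : - lqpi x = lqpi (- x). Proof. exact: lqoppE. Qed.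

Lemma lqpi0 : lqpi 0 = 0. Proof. by []. Qed.

Lemma lqscaleA a b (c : Q) : lqscale a (lqscale b c) = lqscale (a * b) c.
Proof. by elim/lquot_ind: c => x; rewrite !lqscaleE scalerA. Qed.

Lemma lqscale1 (c : Q) : lqscale 1 c = c.
Proof. by elim/lquot_ind: c => x; rewrite lqscaleE scale1r. Qed.

Lemma lqscaleDr a : {morph @lqscale K L I hI a : c d / c + d}.
Proof.
move=> c d; elim/lquot_ind: c => x; elim/lquot_ind: d => y.
by rewrite lqpiD !lqscaleE lqpiD scalerDr.
Qed.

Lemma lqscaleDl (c : Q) : {morph (@lqscale K L I hI)^~ c : a b / a + b}.
Proof. by move=> a b; elim/lquot_ind: c => x; rewrite !lqscaleE lqpiD scalerDl. Qed.

End QuotientLmod.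

HB.instance Definition _ (K : fieldType) (L : lieSuperType K) (I : L -> Prop)
  (hI : graded_ideal I) :=
  GRing.Zmodule_isLmodule.Build K (lquot hI)
    (@lqscaleA K L I hI) (@lqscale1 K L I hI) (@lqscaleDr K L I hI) (@lqscaleDl K L I hI).

Section QuotientLieSuper.
Variables (K : fieldType) (L : lieSuperType K) (I : L -> Prop).
Hypothesis hI : graded_ideal I.
Local Notation Q := (lquot hI).
Local Notation lqpi := (lqpi hI).
Local Notation lqsev := (@lqsev K L I hI).
Local Notation lqsod := (@lqsod K L I hI).
Local Notation lqlbr := (@lqlbr K L I hI).
Implicit Types (x y z : L) (c d e : Q).

Lemma lqpiZ a x : a *: lqpi x = lqpi (a *: x). Proof. exact: lqscaleE. Qed.

Lemma homog_lquot p c : homog lqsev lqsod p c ->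
  exists x, homog sev sod p x /\ c = lqpi x.
Proof. by case: p. Qed.

Lemma homog_lqpi p x : homog sev sod p x -> homog lqsev lqsod p (lqpi x).
Proof. by case: p => h; exists x. Qed.

Lemma lqsev0 : lqsev 0. Proof. by exists 0; split=> //; apply: sev0. Qed.

Lemma lqsod0 : lqsod 0. Proof. by exists 0; split=> //; apply: sod0. Qed.

Lemma lqsevD c d : lqsev c -> lqsev d -> lqsev (c + d).
Proof. by move=> [x [hx ->]] [y [hy ->]]; exists (x + y); rewrite lqpiD; split=> //; apply: sevD. Qed.

Lemma lqsodD c d : lqsod c -> lqsod d -> lqsod (c + d).
Proof. by move=> [x [hx ->]] [y [hy ->]]; exists (x + y); rewrite lqpiD; split=> //; apply: sodD. Qed.

Lemma lqsevZ a c : lqsev c -> lqsev (a *: c).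
Proof. by move=> [x [hx ->]]; exists (a *: x); rewrite lqpiZ; split=> //; apply: sevZ. Qed.

Lemma lqsodZ a c : lqsod c -> lqsod (a *: c).
Proof. by move=> [x [hx ->]]; exists (a *: x); rewrite lqpiZ; split=> //; apply: sodZ. Qed.

Lemma lqdecomp c : exists a b, lqsev a /\ lqsod b /\ c = a + b.
Proof.
elim/lquot_ind: c => x; have [a [b [ha [hb ->]]]] := sdecomp x.
by exists (lqpi a), (lqpi b); rewrite lqpiD; split; [exists a | split; [exists b |]].
Qed.

Lemma lqdirect c : lqsev c -> lqsod c -> c = 0.
Proof.
move=> [x [hx ->]] [y [hy /lqpi_eqP e]]; rewrite -lqpi0; apply: lqpi_eq.
by rewrite subr0; apply: ideal_sev_sod e.
Qed.

Lemma lqlinl a c d e : lqlbr (a *: c + d) e = a *: lqlbr c e + lqlbr d e.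
Proof.
elim/lquot_ind: c => x; elim/lquot_ind: d => y; elim/lquot_ind: e => z.
by rewrite lqpiZ lqpiD !lqlbrE lqpiZ lqpiD lbr_linl.
Qed.

Lemma lqlinr a c d e : lqlbr e (a *: c + d) = a *: lqlbr e c + lqlbr e d.
Proof.
elim/lquot_ind: c => x; elim/lquot_ind: d => y; elim/lquot_ind: e => z.
by rewrite lqpiZ lqpiD !lqlbrE lqpiZ lqpiD lbr_linr.
Qed.

Lemma lqgraded p q c d : homog lqsev lqsod p c -> homog lqsev lqsod q d ->
  homog lqsev lqsod (addb p q) (lqlbr c d).
Proof.
move=> /homog_lquot [x [hx ->]] /homog_lquot [y [hy ->]]; rewrite lqlbrE.
by apply: homog_lqpi; apply: lbr_graded.
Qed.

Lemma lqsanti p q c d : homog lqsev lqsod p c -> homog lqsev lqsod q d ->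
  lqlbr c d = - (psign K p q *: lqlbr d c).
Proof.
move=> /homog_lquot [x [hx ->]] /homog_lquot [y [hy ->]].
by rewrite !lqlbrE lqpiZ lqpiN (lbr_santi p q _ _ hx hy).
Qed.

Lemma lqjacobi p q r c d e : homog lqsev lqsod p c -> homog lqsev lqsod q d ->
  homog lqsev lqsod r e ->
  psign K p r *: lqlbr c (lqlbr d e) + psign K q p *: lqlbr d (lqlbr e c)
    + psign K r q *: lqlbr e (lqlbr c d) = 0.
Proof.
move=> /homog_lquot [x [hx ->]] /homog_lquot [y [hy ->]] /homog_lquot [z [hz ->]].
by rewrite !lqlbrE !lqpiZ (lqpiD hI (psign K p r *: _)) lqpiD (lbr_sjacobi p q r _ _ _ hx hy hz).
Qed.

End QuotientLieSuper.

HB.instance Definition _ (K : fieldType) (L : lieSuperType K) (I : L -> Prop)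
  (hI : graded_ideal I) :=
  isLieSuper.Build K (lquot hI) (@lqsev0 K L I hI) (@lqsevD K L I hI)
    (@lqsevZ K L I hI) (@lqsod0 K L I hI) (@lqsodD K L I hI) (@lqsodZ K L I hI)
    (@lqdecomp K L I hI) (@lqdirect K L I hI) (@lqlinl K L I hI) (@lqlinr K L I hI)
    (@lqgraded K L I hI) (@lqsanti K L I hI) (@lqjacobi K L I hI).

Section Homomorphisms.
Variables (K : fieldType) (A B : lieSuperType K) (f : A -> B).
Hypothesis hf : is_lshom f.
Implicit Types x y : A.

Lemma lshomD x y : f (x + y) = f x + f y.
Proof. by have := hf.1 1 x y; rewrite !scale1r. Qed.

Lemma lshom0 : f 0 = 0.
Proof. by apply: (@addrI _ (f 0)); rewrite -lshomD !addr0. Qed.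

Lemma lshomZ a x : f (a *: x) = a *: f x.
Proof. by have := hf.1 a x 0; rewrite !addr0 lshom0 addr0. Qed.

Lemma lshomB x y : f (x - y) = f x - f y.
Proof. by rewrite lshomD -scaleN1r lshomZ scaleN1r. Qed.

Lemma lshom_lbr x y : f (lbr x y) = lbr (f x) (f y).
Proof. exact: hf.2.2.2. Qed.

Lemma lshom_homog p x : homog sev sod p x -> homog sev sod p (f x).
Proof. by case: p; [apply: hf.2.2.1 | apply: hf.2.1]. Qed.

Lemma lshom_sum (T : Type) (s : seq T) (G : T -> A) :
  f (\sum_(t <- s) G t) = \sum_(t <- s) f (G t).
Proof. by elim: s => [|t s IH]; rewrite ?big_nil ?lshom0 // !big_cons lshomD IH. Qed.

Lemma lshom_lift_homog p (w : B) : surj f -> homog sev sod p w ->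
  exists x, homog sev sod p x /\ f x = w.
Proof.
move=> fs; have [u <-] := fs w; move=> hw; have [u0 [u1 [h0 [h1 eu]]]] := sdecomp u.
have [f0 f1] := (hf.2.1 _ h0, hf.2.2.1 _ h1).
rewrite {}eu lshomD in hw *; case: p hw => /= hw.
  exists u1; split=> //.
  have e : f u0 + (f u1 - (f u0 + f u1)) = 0 by rewrite addrA subrr.
  by have [-> _] := sev_sod_add_eq0 f0 (sodD _ _ f1 (sodN hw)) e; rewrite add0r.
exists u0; split=> //.
have e : (f u0 - (f u0 + f u1)) + f u1 = 0 by rewrite opprD addrA subrr add0r addNr.
by have [_ ->] := sev_sod_add_eq0 (sevD _ _ f0 (sevN hw)) f1 e; rewrite addr0.
Qed.

End Homomorphisms.

Lemma lshom_comp (K : fieldType) (A B C : lieSuperType K) (f : A -> B) (g : B -> C) :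
  is_lshom f -> is_lshom g -> is_lshom (fun x => g (f x)).
Proof.
move=> hf hg; split; first by move=> a x y; rewrite hf.1 hg.1.
split; first by move=> x /hf.2.1 /hg.2.1.
split; first by move=> x /hf.2.2.1 /hg.2.2.1.
by move=> x y; rewrite hf.2.2.2 hg.2.2.2.
Qed.

Lemma lshom_factor (K : fieldType) (A B C : lieSuperType K) (q : A -> B) (g : B -> C) :
  is_lshom q -> surj q -> is_lshom (fun x => g (q x)) -> is_lshom g.
Proof.
move=> hq hqs hgq; split.
  by move=> a u v; have [x <-] := hqs u; have [y <-] := hqs v; rewrite -hq.1 hgq.1.
split.
  by move=> u /(lshom_lift_homog hq (p := false) hqs) [x [/hgq.2.1 hx <-]].
split.
  by move=> u /(lshom_lift_homog hq (p := true) hqs) [x [/hgq.2.2.1 hx <-]].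
move=> u v; have [x <-] := hqs u; have [y <-] := hqs v.
by rewrite -(lshom_lbr hq) hgq.2.2.2.
Qed.

Section QuotientProjection.
Variables (K : fieldType) (L : lieSuperType K) (I : L -> Prop).
Hypothesis hI : graded_ideal I.

Lemma lqpi_lshom : is_lshom (lqpi hI).
Proof.
split; first by move=> a x y; rewrite lqpiZ lqpiD.
split; first by move=> x hx; exists x.
split; first by move=> x hx; exists x.
by move=> x y; rewrite -lqlbrE.
Qed.

Lemma lqpi_surj : surj (lqpi hI).
Proof. by move=> c; exists (lqrepr c); rewrite lqreprK. Qed.

Lemma lqpi_ker x : lqpi hI x = 0 <-> I x.
Proof.
rewrite -lqpi0; split; first by move/lqpi_eqP; rewrite subr0.
by move=> h; apply: lqpi_eq; rewrite subr0.
Qed.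

Lemma quot_capable_lquot : capable (lquot hI) -> quot_capable I.
Proof.
by exists (lquot hI), (lqpi hI); split; [|split; [|split]];
  [apply: lqpi_lshom | apply: lqpi_surj | apply: lqpi_ker |].
Qed.

End QuotientProjection.

Definition lcenter_image (K : fieldType) (A B : lieSuperType K) (f : A -> B) (y : B) : Prop :=
  exists z, lcenter z /\ y = f z.

Section ImageOfCenter.
Variables (K : fieldType) (A B : lieSuperType K) (f : A -> B).
Hypotheses (hf : is_lshom f) (hfs : surj f).

Lemma lcenter_image_graded_ideal : graded_ideal (lcenter_image f).
Proof.
split; first by exists 0; rewrite lshom0 //; split=> //; apply: lcenter0.
split.
  move=> _ _ [z [hz ->]] [z' [hz' ->]]; exists (z + z').
  by rewrite lshomD //; split=> //; apply: lcenterD.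
split.
  move=> a _ [z [hz ->]]; exists (a *: z).
  by rewrite lshomZ //; split=> //; apply: lcenterZ.
split.
  move=> _ [z [hz ->]]; have [z0 [z1 [h0 [h1 ez]]]] := sdecomp z.
  have [c0 c1] := lcenter_homog_components hz h0 h1 ez.
  exists (f z0), (f z1); do !split; try by [exists z0 | exists z1].
  - exact: hf.2.1.
  - exact: hf.2.2.1.
  - by rewrite ez lshomD.
move=> _ y [z [hz ->]]; have [w <-] := hfs y.
split; exists 0; split; try exact: lcenter0.
  by rewrite -(lshom_lbr hf) hz.
by rewrite -(lshom_lbr hf) lbr_lcenter.
Qed.

(* The composite A -> B -> B / f(Z(A)) realises B / f(Z(A)) as A / Z(A). *)
Lemma quot_capable_lcenter_image :
  (forall u, f u = 0 -> lcenter u) -> quot_capable (lcenter_image f).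
Proof.
move=> kerZ; have hZ := lcenter_image_graded_ideal.
apply: (quot_capable_lquot (hI := hZ)); exists A, (fun z => lqpi hZ (f z)).
split; first exact: lshom_comp hf (lqpi_lshom hZ).
split.
  by move=> c; have [x <-] := lqpi_surj (hI := hZ) c; have [z <-] := hfs x; exists z.
move=> h; rewrite lqpi_ker; split; last by exists h.
move=> [z [hz e]]; have /kerZ hc : f (h - z) = 0 by rewrite lshomB // e subrr.
by rewrite -(subrK z h); apply: lcenterD.
Qed.

End ImageOfCenter.

Lemma free_on_lift (K : fieldType) (X : Type) (par : X -> bool)
    (F H M : lieSuperType K) (i : X -> F) (f : H -> M) (g : F -> M) :
  free_on par i -> is_lshom f -> surj f -> is_lshom g ->
  exists psi : F -> H, is_lshom psi /\ forall y, f (psi y) = g y.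
Proof.
move=> [ihomog univ] hf hfs hg.
have [gH hgH] := choice (fun t => lshom_lift_homog hf hfs
  (lshom_homog hg (ihomog t))).
have [psi [hpsi [psi_i _]]] := univ H gH (fun t => (hgH t).1).
have [phi [_ [_ phi_uniq]]] :=
  univ M (fun t => g (i t)) (fun t => lshom_homog hg (ihomog t)).
exists psi; split=> // y.
rewrite (phi_uniq _ (lshom_comp hpsi hf)); last by move=> t; rewrite psi_i (hgH t).2.
by rewrite (phi_uniq _ hg).
Qed.

Section CentralLift.
Variables (K : fieldType) (F H M : lieSuperType K).
Variables (psi : F -> H) (f : H -> M) (g : F -> M).
Hypotheses (hpsi : is_lshom psi) (hf : is_lshom f) (hgs : surj g).
Hypotheses (kerf : forall h, f h = 0 <-> lcenter h) (hfpsi : forall y, f (psi y) = g y).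
Variable R : F -> Prop.
Hypothesis hR : forall r, R r -> g r = 0.

Lemma lift_lcenter_ker r : R r -> lcenter (psi r).
Proof. by move=> /hR gr; apply/kerf; rewrite hfpsi. Qed.

Lemma lift_comm_sub x : comm_sub R x -> psi x = 0.
Proof.
move=> [s [hs ->]]; rewrite (lshom_sum hpsi); apply: big1_seq => pr /andP [_ /hs Rpr].
by rewrite (lshom_lbr hpsi) lift_lcenter_ker.
Qed.

(* Surjectivity of g and kerf give H = psi(F) + Z(H). *)
Lemma lift_lcenter x : (forall y, comm_sub R (lbr x y)) -> lcenter (psi x).
Proof.
move=> hx h; have [y ey] := hgs (f h).
have /kerf hc : f (h - psi y) = 0 by rewrite (lshomB hf) hfpsi ey subrr.
rewrite -(subrK (psi y) h) lbrDr (lbr_lcenter _ hc) add0r -(lshom_lbr hpsi).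
exact: lift_comm_sub.
Qed.

End CentralLift.

Section FreePresentation.
Variables (K : fieldType) (L F Q : lieSuperType K) (X : Type) (par : X -> bool).
Variables (i : X -> F) (pi : F -> L) (q : F -> Q) (pibar : Q -> L).
Hypotheses (hfree : free_on par i) (hpi : is_lshom pi) (hpis : surj pi).
Hypotheses (hq : is_lshom q) (hqs : surj q).
Hypothesis hqker : forall x, q x = 0 <-> comm_sub (fun r => pi r = 0) x.
Hypothesis hpibar : forall x, pibar (q x) = pi x.

Lemma pibar_lshom : is_lshom pibar.
Proof.
apply: (lshom_factor hq hqs).
by have -> : (fun x => pibar (q x)) = pi by apply: funext.
Qed.

Lemma pibar_surj : surj pibar.
Proof. by move=> y; have [x <-] := hpis y; exists (q x). Qed.

Lemma pibar_ker_lcenter u : pibar u = 0 -> lcenter u.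
Proof.
have [x <-] := hqs u; rewrite hpibar => hx w; have [y <-] := hqs w.
rewrite -(lshom_lbr hq); apply/hqker; exists [:: (x, y)]; rewrite big_seq1.
by split=> // pr; rewrite inE => /eqP ->.
Qed.

Lemma lcenter_image_pibar_min J : quot_capable J -> forall y, lcenter_image pibar y -> J y.
Proof.
move=> [M [p [hp [hps [pker [H [f [hf [hfs fker]]]]]]]]] _ [z [hz ->]].
have [psi [hpsi hfpsi]] := free_on_lift hfree hf hfs (lshom_comp hpi hp).
have [x ex] := hqs z; subst z; apply/pker; rewrite hpibar -hfpsi; apply/fker.
apply: (lift_lcenter hpsi hf _ fker hfpsi (R := fun r => pi r = 0)).
- by move=> m; have [l <-] := hps m; have [y <-] := hpis l; exists y.
- by move=> r /= ->; rewrite (lshom0 hp).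
- by move=> y; apply/hqker; rewrite (lshom_lbr hq) hz.
Qed.

End FreePresentation.

Unset Implicit Arguments.
Set Strict Implicit.

Theorem mainTheorem12 (K : fieldType)
    (hK2 : (2%:R : K) != 0) (hK3 : (3%:R : K) != 0)
    (L F : lieSuperType K) (X : Type) (par : X -> bool) (i : X -> F)
    (hfree : free_on par i)
    (pi : F -> L) (hpi : is_lshom pi) (hpis : surj pi)
    (Q : lieSuperType K) (q : F -> Q) (hq : is_lshom q) (hqs : surj q)
    (hqker : forall x, q x = 0 <-> comm_sub (fun r => pi r = 0) x)
    (pibar : Q -> L) (hpibar : forall x, pibar (q x) = pi x) :
  is_epicenter (fun y : L => exists z : Q, lcenter z /\ y = pibar z).
Proof.
have hpb : is_lshom pibar := pibar_lshom hpi hq hqs hpibar.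
have hpbs : surj pibar := pibar_surj hpis hpibar.
split; first exact: lcenter_image_graded_ideal hpb hpbs.
split; first exact: quot_capable_lcenter_image hpb hpbs
  (pibar_ker_lcenter hq hqs hqker hpibar).
by move=> J _; apply: (lcenter_image_pibar_min hfree hpi hpis hq hqs hqker hpibar).
Qed.
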